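(* For every $n\ge 1$, the map $\Phi:\mathfrak{W}_n\to\mathcal{S}_n$ defined below is well defined (its output is a snake of length $n$) and is a bijection.
   Context: Let $[n]=\{1,\dots,n\}$ and let $\mathfrak{S}_n$ be the set of permutations of $[n]$, written in one-line notation $\sigma=\sigma_1\cdots\sigma_n$. A signed permutation of length $n$ is a word $p_1\cdots p_n$ with $p_i\in\{\pm1,\dots,\pm n\}$ such that $|p_1|\cdots|p_n|\in\mathfrak{S}_n$. A snake of length $n$ is a signed permutation with $p_1>0$ and $p_1>p_2<p_3>p_4<\cdots$ (strict inequalities alternating, starting with a descent). Let $\mathcal{S}_n$ denote the set of snakes of length $n$. A weakly increasing 3-dimensional permutation (3-WIP) of length $n$ is a pair $(\sigma,\pi)\in\mathfrak{S}_n^2$ with $\max(\sigma_1,\pi_1)\le\max(\sigma_2,\pi_2)\le\cdots\le\max(\sigma_n,\pi_n)$. Let $\mathfrak{W}_n$ be the set of these. For $\tau\in\mathfrak{S}_n$, a letter $k\in\{2,\dots,n\}$ is a cycle peak of $\tau$ if $\tau^{-1}(k)<k>\tau(k)$. The standard cycle form of $\tau$ writes each cycle with its largest element first and lists the cycles from left to right in increasing order of their largest elements. Foata's map $f:\mathfrak{S}_n\to\mathfrak{S}_n$ sends $\tau$ to the word obtained by erasing the parentheses of the standard cycle form of $\tau$. For a word $t=t_1\cdots t_n\in\mathfrak{S}_n$, set $t_0=0$, $t_{n+1}=+\infty$. Then $t_i$ is a left peak if $t_{i-1}<t_i>t_{i+1}$, and a right valley if $t_{i-1}>t_i<t_{i+1}$.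 Definition of $\Phi(\sigma,\pi)$ for $(\sigma,\pi)\in\mathfrak{W}_n$: (1) Let $\tau\in\mathfrak{S}_n$ be the permutation with $\tau(\sigma_i)=\pi_i$ for all $i$. Call a letter $k$ hatted if $k$ is a cycle peak of $\tau$ and there exists $\ell\in[n-1]$ with $\sigma_\ell=\pi_{\ell+1}=k$. (2) Let $\tilde\tau=f(\tau)$. The hatted letters keep their hats; they are left peaks of $\tilde\tau$. (3) Associate each right valley $\tilde\tau_i$ of $\tilde\tau$ with the left peak $\tilde\tau_j$ having the largest index $j<i$. Define $\Phi(\sigma,\pi)=p_1\cdots p_n$ by $p_i=-\tilde\tau_i$ if either (a) $i$ is even and $\tilde\tau_i$ is not a right valley, or (b) $\tilde\tau_i$ is a right valley whose associated left peak is hatted; and $p_i=\tilde\tau_i$ otherwise. Example: $(\sigma,\pi)=(152673894,\,256317849)$ gives $\tau=(5)(\hat7,1,2,6,3)(8)(\hat9,4)$, then $\tilde\tau=5\,\hat7\,1\,2\,6\,3\,8\,\hat9\,4$, and finally $\Phi(\sigma,\pi)=5\,\bar7\,\bar1\,\bar2\,6\,3\,8\,\bar9\,\bar4$, where $\bar k$ means $-k$. *)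

(* Permutations of [n] = {1..n} are represented as words
   (seq nat) that are rearrangements of [:: 1; ...; n]; signed permutations
   as words in seq int. Positions in words are 1-based in the comments
   (t_i = nth 0 t i.-1). *)
From mathcomp Require Import all_boot all_order all_algebra.
Set Implicit Arguments. Unset Strict Implicit. Unset Printing Implicit Defensive.
Import GRing.Theory Num.Theory.

Definition is_perm (n : nat) (s : seq nat) : bool := perm_eq s (iota 1 n).

Definition is_WIP (n : nat) (w : seq nat * seq nat) : bool :=
  [&& is_perm n w.1, is_perm n w.2 &
      sorted leq [seq maxn x.1 x.2 | x <- zip w.1 w.2]].

Definition is_signed_perm (n : nat) (p : seq int) : bool :=
  (size p == n) && perm_eq [seq absz x | x <- p] (iota 1 n).

Definition is_snake (n : nat) (p : seq int) : bool :=
  [&& is_signed_perm n p,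
      (0 < nth 0 p 0)%R &
      all (fun i => if odd i then (nth 0 p i < nth 0 p i.+1)%R
                    else (nth 0 p i.+1 < nth 0 p i)%R) (iota 0 n.-1)].

Section Phi.
Variables (sigma pi : seq nat).
Let n := size sigma.

Definition tau (k : nat) : nat := nth 0 pi (index k sigma).
Definition tau_inv (k : nat) : nat := nth 0 sigma (index k pi).

Definition cycle_peak (k : nat) : bool :=
  [&& 2 <= k <= n, tau_inv k < k & tau k < k].

Definition hatted (k : nat) : bool :=
  cycle_peak k &&
  has (fun l => (nth 0 sigma l.-1 == k) && (nth 0 pi l == k)) (iota 1 n.-1).

Definition cyc (k : nat) : seq nat :=
  traject tau k (find (fun j => iter j.+1 tau k == k) (iota 0 n)).+1.

Definition foata : seq nat :=
  flatten [seq cyc k | k <- iota 1 n & all (fun x => x <= k) (cyc k)].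

Definition tt (i : nat) : nat := nth 0 foata i.-1.

(* left peak / right valley at position i (1-based), with t_0 = 0, t_(n+1) = +oo *)
Definition left_peak (i : nat) : bool :=
  [&& 1 <= i <= n, (i == 1) || (tt i.-1 < tt i) & (i < n) && (tt i.+1 < tt i)].
Definition right_valley (i : nat) : bool :=
  [&& 1 <= i <= n, (1 < i) && (tt i < tt i.-1) & (i == n) || (tt i < tt i.+1)].

Definition assoc_peak_hatted (i : nat) : bool :=
  let J := [seq j <- iota 1 i.-1 | left_peak j] in
  (J != [::]) && hatted (tt (last 0 J)).

Definition Phi_sign (i : nat) : bool :=
  (~~ odd i && ~~ right_valley i) || (right_valley i && assoc_peak_hatted i).

Definition Phi_word : seq int :=
  [seq (if Phi_sign i then - (tt i)%:Z else (tt i)%:Z)%R | i <- iota 1 n].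
End Phi.

Definition Phi (w : seq nat * seq nat) : seq int := Phi_word w.1 w.2.

(* Phi factors through the Foata word t of tau and the set of hatted letters.
   A signed word with absolute values t is a snake iff at every position that is
   not a right valley of t it is negative exactly when the position is even; the
   signs at the right valleys are free, and right valleys correspond bijectively
   to the left peaks of t through the association of step (3).  So snakes over t
   correspond to subsets of the left peaks of t.  The left peaks of a Foata word
   are the cycle peaks of the permutation (its cycles are cut at the
   left-to-right maxima), and Foata's map is a bijection.  Finally a 3-WIP is
   determined by tau and its hatted letters, since sigma is sorted by
   max(sigma_i, pi_i) and the only ties, between a cycle peak k and tau^-1(k),
   are resolved by whether k is hatted; conversely every such pair comes from a
   3-WIP. *)

From mathcomp Require Import all_boot all_algebra zify.
Set Implicit Arguments. Unset Strict Implicit. Unset Printing Implicit Defensive.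
Import GRing.Theory Num.Theory.

Definition letter (t : seq nat) (i : nat) : nat := nth 0 t i.-1.

Definition lpeak n t i :=
  [&& 1 <= i <= n, (i == 1) || (letter t i.-1 < letter t i)
    & (i < n) && (letter t i.+1 < letter t i)].
Definition rvalley n t i :=
  [&& 1 <= i <= n, (1 < i) && (letter t i < letter t i.-1)
    & (i == n) || (letter t i < letter t i.+1)].

Definition peaks_before n t i := [seq j <- iota 1 i.-1 | lpeak n t j].

Definition assoc_peak n t i := last 0 (peaks_before n t i).

Definition negative_at n t (h : pred nat) i :=
  if rvalley n t i then (peaks_before n t i != [::]) && h (letter t (assoc_peak n t i))
  else ~~ odd i.

Definition signed_word n t (h : pred nat) : seq int :=
  [seq (if negative_at n t h i then - (letter t i)%:Z else (letter t i)%:Z)%R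
  | i <- iota 1 n].

Lemma Phi_signed_word s p : Phi (s, p) = signed_word (size s) (foata s p) (hatted s p).
Proof.
apply/eq_in_map => i _; rewrite /= /Phi_sign /negative_at.
have -> : rvalley (size s) (foata s p) i = right_valley s p i by [].
by case: right_valley; rewrite ?andbT ?andbF ?orbF.
Qed.

Lemma nth_absz (p : seq int) i : nth 0 (map absz p) i = absz (nth 0%R p i).
Proof.
case: (ltnP i (size p)) => h; first by rewrite (nth_map 0%R).
by rewrite !nth_default ?size_map.
Qed.

Lemma signed_perm_absz_gt0 n p i : is_signed_perm n p -> i < n -> 0 < absz (nth 0%R p i).
Proof.
case/andP=> /eqP sz pe lt; rewrite -nth_absz.
have : nth 0 (map absz p) i \in iota 1 n.
  by rewrite -(perm_mem pe) mem_nth // size_map sz.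
by rewrite mem_iota; case/andP.
Qed.

Lemma snake_step n p j : is_snake n p -> j.+1 < n ->
  if odd j then (nth 0%R p j < nth 0%R p j.+1)%R else (nth 0%R p j.+1 < nth 0%R p j)%R.
Proof. by case/and3P=> _ _ /allP H lt; apply: H; rewrite mem_iota /=; lia. Qed.

Definition sign_pattern n (p : seq int) :=
  forall i, i < n -> ~~ rvalley n (map absz p) i.+1 -> (nth 0%R p i < 0)%R = odd i.

Lemma sign_pattern_snake n p : 0 < n -> is_signed_perm n p -> sign_pattern n p ->
  is_snake n p.
Proof.
move=> n0 sp H; apply/and3P; split => //.
  have := H 0 n0; rewrite /rvalley ltnn andbF /= => /(_ isT) h.
  by have := signed_perm_absz_gt0 sp n0; move: h; rewrite /=; lia.
apply/allP=> i; rewrite mem_iota add0n => /andP[_ lti].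
have lt1 : i.+1 < n by lia.
have pa := signed_perm_absz_gt0 sp (ltnW lt1); have pb := signed_perm_absz_gt0 sp lt1.
have R1 : rvalley n (map absz p) i.+1 -> absz (nth 0%R p i) < absz (nth 0%R p i.+1).
  by rewrite /rvalley /letter /= !nth_absz => /and3P[_ _]; case: eqP => //=; lia.
have R2 : rvalley n (map absz p) i.+2 -> absz (nth 0%R p i.+1) < absz (nth 0%R p i).
  by rewrite /rvalley /letter /= !nth_absz; case/and3P=> _ h _; exact h.
have H1 := H i (ltnW lt1); have H2 := H i.+1 lt1.
move: R1 R2 H1 H2 pa pb; rewrite /=.
by case: (odd i); case: (rvalley n _ i.+1); case: (rvalley n _ i.+2) => /=; lia.
Qed.

Lemma snake_sign_pattern n p : is_snake n p -> sign_pattern n p.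
Proof.
move=> sn i lti; have sp : is_signed_perm n p by case/and3P: sn.
have p0 : (0 < nth 0 p 0)%R by case/and3P: sn.
have pa := signed_perm_absz_gt0 sp lti.
apply: contraNeq => ne; rewrite /rvalley /letter /= !nth_absz.
apply/and3P; split; first by lia.
- case: i lti pa ne => [|i] lti pa ne.
    by move: ne p0; rewrite /= ?eqbF_neg ?negbK ?eqb_id; lia.
  have := snake_step sn lti; move: ne pa; rewrite /=.
  by case: (odd i) => /=; rewrite ?eqbF_neg ?negbK ?eqb_id; lia.
- case: (eqVneq i.+1 n) => //= ni; have lt1 : i.+1 < n by lia.
  have := snake_step sn lt1; move: ne pa; rewrite /=.
  by case: (odd i) => /=; rewrite ?eqbF_neg ?negbK ?eqb_id; lia.
Qed.

Lemma iota1S m : iota 1 m.+1 = rcons (iota 1 m) m.+1.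
Proof. by rewrite -cats1; have := iotaD 1 m 1; rewrite addn1 add1n. Qed.

Lemma last_filter_iotaP (P : pred nat) m j :
  (filter P (iota 1 m) != [::] /\ last 0 (filter P (iota 1 m)) = j) <->
  [/\ 1 <= j <= m, P j & forall l, j < l <= m -> ~~ P l].
Proof.
elim: m => [|m IH]; first by split=> [[]|[]] //; lia.
rewrite iota1S filter_rcons; case Pm: (P m.+1).
  rewrite last_rcons; split=> [[_ <-]|[jm Pj maxj]].
    by split=> //; [lia | move=> l; lia].
  split; first by case: (filter _ _).
  case: (ltngtP j m.+1) => // jm'; last lia.
  by have := maxj m.+1; rewrite Pm ltnSn jm' => /(_ isT).
rewrite IH; split=> [[jm Pj maxj]|[jm Pj maxj]].
  split=> //; first lia.
  move=> l /andP[jl]; rewrite leq_eqVlt => /orP[/eqP -> | lm]; first by rewrite Pm.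
  by apply: maxj; rewrite jl.
split=> //; last by move=> l /andP[jl lm]; apply: maxj; rewrite jl; lia.
case: (ltngtP j m.+1) => jm'; [lia | lia | by move: Pj; rewrite jm' Pm].
Qed.

Lemma assoc_peakP n t i j :
  (peaks_before n t i != [::] /\ assoc_peak n t i = j) <->
  [/\ 1 <= j < i, lpeak n t j & forall l, j < l < i -> ~~ lpeak n t l].
Proof.
rewrite /assoc_peak /peaks_before last_filter_iotaP.
by split=> -[jm Pj maxj]; split=> // [|l jl]; try apply: maxj; lia.
Qed.

Section DistinctLetters.
Variables (n : nat) (t : seq nat).
Hypotheses (t_uniq : uniq t) (t_size : size t = n).

Lemma letter_neq a b : 1 <= a <= n -> 1 <= b <= n -> a != b -> letter t a != letter t b.
Proof. by move=> ha hb ab; rewrite /letter nth_uniq ?t_size //; lia. Qed.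

Lemma letter_lt_total a b : 1 <= a <= n -> 1 <= b <= n -> a != b ->
  (letter t a < letter t b) || (letter t b < letter t a).
Proof. by move=> ha hb ab; have := letter_neq ha hb ab; lia. Qed.

Lemma descent_from_peak k : 1 <= k < n -> letter t k.+1 < letter t k ->
  exists j, [/\ 1 <= j <= k, lpeak n t j
            & forall l, j < l <= k -> letter t l < letter t l.-1].
Proof.
elim: k => [|k IH] // /andP[_ kn] dk.
case: (posnP k) => [k0|kpos].
  subst k; exists 1; split=> //; first by rewrite /lpeak /=; apply/andP; split; lia.
  by move=> l; lia.
have /orP[up|down] := @letter_lt_total k k.+1 (ltac:(lia)) (ltac:(lia)) (ltac:(lia)).
  exists k.+1; split=> //; first lia; last by move=> l; lia.
  by rewrite /lpeak /= up orbT kn dk; lia.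
have [j [jk pj desc]] := IH (ltac:(lia)) down.
exists j; split=> //; first lia.
move=> l /andP[jl]; rewrite leq_eqVlt => /orP[/eqP -> //|lk].
by apply: desc; rewrite jl.
Qed.

Lemma descent_to_valley j m : 1 <= j < m -> m <= n ->
  (forall l, j < l <= m -> letter t l < letter t l.-1) ->
  exists i, [/\ j < i <= n, rvalley n t i
            & forall l, j < l <= i -> letter t l < letter t l.-1].
Proof.
move=> jm mn; move Ed: (n - m) => d; elim: d m jm mn Ed => [|d IH] m jm mn Ed desc.
  have mE : m = n by lia.
  exists m; split=> //; first lia.
  rewrite /rvalley mE eqxx andbT; apply/andP; split; first lia.
  by rewrite -mE (desc m) ?andbT; lia.
have /orP[up|down] := @letter_lt_total m m.+1 (ltac:(lia)) (ltac:(lia)) (ltac:(lia)).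
  exists m; split=> //; first lia.
  rewrite /rvalley up orbT andbT; apply/andP; split; first lia.
  by rewrite (desc m) ?andbT; lia.
apply: (IH m.+1); [lia | lia | lia |].
move=> l /andP[jl]; rewrite leq_eqVlt => /orP[/eqP -> //|lm].
by apply: desc; rewrite jl.
Qed.

Lemma descent_not_lpeak l : 1 < l -> letter t l < letter t l.-1 -> ~~ lpeak n t l.
Proof. by rewrite /lpeak => l1 d; apply/negP => /and3P[_ /orP[]]; lia. Qed.

Lemma rvalley_has_peak i : rvalley n t i -> peaks_before n t i != [::].
Proof.
case/and3P=> /andP[i1 iN] /andP[i2 d] _.
have [j [jk pj _]] := @descent_from_peak i.-1 (ltac:(lia)) (ltac:(by rewrite prednK; lia)).
apply/eqP => E; have : j \in peaks_before n t i by rewrite mem_filter pj mem_iota; lia.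
by rewrite E.
Qed.

Lemma lpeak_assoc_rvalley j : lpeak n t j ->
  exists i, [/\ rvalley n t i, peaks_before n t i != [::] & assoc_peak n t i = j].
Proof.
move=> pj; have := pj; case/and3P=> /andP[j1 jn] _ /andP[jlt d].
have [i [ji vi desc]] : exists i, [/\ j < i <= n, rvalley n t i
    & forall l, j < l <= i -> letter t l < letter t l.-1].
  apply: (@descent_to_valley j j.+1) => //; first lia.
  by move=> l hl; have -> : l = j.+1 by lia.
have [ne E] : peaks_before n t i != [::] /\ assoc_peak n t i = j.
  apply/assoc_peakP; split=> //; first lia.
  by move=> l hl; apply: descent_not_lpeak; [lia | apply: desc; lia].
by exists i.
Qed.

Lemma assoc_peak_inj i1 i2 : rvalley n t i1 -> rvalley n t i2 ->
  peaks_before n t i1 != [::] -> peaks_before n t i2 != [::] ->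
  assoc_peak n t i1 = assoc_peak n t i2 -> i1 = i2.
Proof.
wlog lt12 : i1 i2 / i1 <= i2.
  move=> W v1 v2 ne1 ne2 E; case: (leqP i1 i2) => h; first exact: W.
  by apply/esym/W => //; lia.
move=> v1 v2 ne1 ne2 E; move: lt12; rewrite leq_eqVlt => /orP[/eqP //|lt12].
exfalso; set j := assoc_peak n t i2 in E.
have [_ _ noPeak] : [/\ 1 <= j < i2, lpeak n t j & forall l, j < l < i2 -> ~~ lpeak n t l]
  by apply/assoc_peakP.
have [ji1 _ _] := proj1 (assoc_peakP n t i1 j) (conj ne1 E).
move: v1 v2; rewrite /rvalley => /and3P[/andP[a1 a2] _ a3] /and3P[/andP[b1 b2] /andP[b3 b4] _].
have up : letter t i1 < letter t i1.+1 by move: a3; case: eqP => //=; lia.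
have [j' [j'i2 pj' desc]] :=
  @descent_from_peak i2.-1 (ltac:(lia)) (ltac:(by rewrite prednK; lia)).
case: (leqP j' i1) => hj'; last by move: pj'; apply/negP/noPeak; lia.
case: (ltngtP i1.+1 i2) => e; [|lia|by move: up b4; rewrite -e /=; lia].
have : letter t i1.+1 < letter t i1.+1.-1 by apply: desc; lia.
by rewrite /=; lia.
Qed.

End DistinctLetters.

Definition index_of (t : seq nat) x := (index x t).+1.

Section PermWord.
Variables (n : nat) (t : seq nat).
Hypothesis t_perm : perm_eq t (iota 1 n).

Lemma size_perm_word : size t = n.
Proof. by rewrite (perm_size t_perm) size_iota. Qed.

Lemma uniq_perm_word : uniq t.
Proof. by rewrite (perm_uniq t_perm) iota_uniq. Qed.

Lemma letter_range i : 1 <= i <= n -> 1 <= letter t i <= n.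
Proof.
move=> hi; have : letter t i \in iota 1 n.
  by rewrite -(perm_mem t_perm) mem_nth // size_perm_word; lia.
by rewrite mem_iota; lia.
Qed.

Lemma index_of_range x : 1 <= x <= n -> 1 <= index_of t x <= n.
Proof.
move=> hx; have xt : x \in t by rewrite (perm_mem t_perm) mem_iota; lia.
by have := index_mem x t; rewrite xt size_perm_word /index_of; lia.
Qed.

Lemma letterK x : 1 <= x <= n -> index_of t (letter t x) = x.
Proof. by move=> hx; rewrite /index_of /letter index_uniq ?uniq_perm_word ?size_perm_word; lia. Qed.

Lemma index_ofK x : 1 <= x <= n -> letter t (index_of t x) = x.
Proof.
move=> hx; have xt : x \in t by rewrite (perm_mem t_perm) mem_iota; lia.
by rewrite /index_of /letter /= nth_index.
Qed.

Lemma letter_onto x : 1 <= x <= n -> exists2 i, 1 <= i <= n & letter t i = x.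
Proof. by move=> hx; exists (index_of t x); [apply: index_of_range | apply: index_ofK]. Qed.

Lemma letter_inj a b : 1 <= a <= n -> 1 <= b <= n -> letter t a = letter t b -> a = b.
Proof. by move=> ha hb E; rewrite -(letterK ha) E letterK. Qed.

End PermWord.

Lemma map_letter_iota (t : seq nat) : [seq letter t i | i <- iota 1 (size t)] = t.
Proof.
have -> : iota 1 (size t) = map (addn 1) (iota 0 (size t)) by rewrite -iotaDl.
by rewrite -map_comp -[RHS](mkseq_nth 0) /mkseq; apply: eq_map.
Qed.

Lemma abs_signed_word n t h : size t = n -> map absz (signed_word n t h) = t.
Proof.
move=> <-; rewrite -map_comp -[RHS]map_letter_iota; apply: eq_map => i /=.
by case: negative_at => /=; lia.
Qed.

Lemma nth_signed_word n t h i : i < n ->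
  nth 0%R (signed_word n t h) i =
  (if negative_at n t h i.+1 then - (letter t i.+1)%:Z else (letter t i.+1)%:Z)%R.
Proof. by move=> lt; rewrite (nth_map 0) ?size_iota // nth_iota // add1n. Qed.

Section SignedWord.
Variables (n : nat) (t : seq nat).
Hypothesis t_perm : perm_eq t (iota 1 n).
Let t_size := size_perm_word t_perm.
Let t_uniq := uniq_perm_word t_perm.

Lemma signed_word_snake h : 0 < n -> is_snake n (signed_word n t h).
Proof.
move=> n0; apply: sign_pattern_snake => //.
  by rewrite /is_signed_perm abs_signed_word ?t_size // size_map size_iota eqxx.
move=> i lti; rewrite abs_signed_word ?t_size // => nv.
have := @letter_range _ _ t_perm i.+1 (ltac:(lia)).
by rewrite nth_signed_word // /negative_at (negbTE nv) /=; case: (odd i) => /=; lia.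
Qed.

Lemma signed_word_hats h h' j : signed_word n t h = signed_word n t h' ->
  lpeak n t j -> h (letter t j) = h' (letter t j).
Proof.
move=> E pj.
have [i [vi ne <-]] := lpeak_assoc_rvalley t_uniq t_size pj.
have hi : 1 <= i <= n by case/and3P: vi.
have := congr1 (fun w => nth 0%R w i.-1) E; rewrite /= !nth_signed_word; try lia.
rewrite prednK; last lia.
rewrite /negative_at vi ne /=.
by have := letter_range t_perm hi; case: (h _); case: (h' _) => //; lia.
Qed.

End SignedWord.

Definition snake_hats n (p : seq int) (k : nat) : bool :=
  let t := map absz p in
  has (fun i => [&& rvalley n t i, peaks_before n t i != [::],
                    letter t (assoc_peak n t i) == k & (nth 0%R p i.-1 < 0)%R])
      (iota 1 n).

Lemma snake_hats_rvalley n p i : is_signed_perm n p ->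
  rvalley n (map absz p) i.+1 ->
  snake_hats n p (letter (map absz p) (assoc_peak n (map absz p) i.+1)) =
  (nth 0%R p i < 0)%R.
Proof.
case/andP=> _ t_perm vi; set t := map absz p in t_perm vi *.
have szt := size_perm_word t_perm; have ut := uniq_perm_word t_perm.
have hi : 1 <= i.+1 <= n by case/and3P: vi.
have ne := rvalley_has_peak ut szt vi.
have [ji _ _] := proj1 (assoc_peakP n t i.+1 _) (conj ne erefl).
apply/hasP/idP => [[i' /[!mem_iota] hi' /and4P[vi' ne' /eqP E neg]] | neg].
  suff -> : i = i'.-1 by [].
  have [ji' _ _] := proj1 (assoc_peakP n t i' _) (conj ne' erefl).
  have : i' = i.+1; last lia.
  apply: (assoc_peak_inj ut szt vi' vi ne' ne); apply/eqP.
  by move: E; apply: contra_eqT => /(letter_neq ut szt) ->; lia.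
exists i.+1; first by rewrite mem_iota; lia.
by rewrite vi ne eqxx.
Qed.

Lemma signed_word_of_snake n p h : is_snake n p ->
  (forall j, lpeak n (map absz p) j ->
     h (letter (map absz p) j) = snake_hats n p (letter (map absz p) j)) ->
  signed_word n (map absz p) h = p.
Proof.
move=> sn hats; have sp : is_signed_perm n p by case/and3P: sn.
have sz : size p = n by case/andP: sp => /eqP.
apply: (@eq_from_nth _ 0%R); first by rewrite size_map size_iota sz.
move=> i; rewrite size_map size_iota => lti.
rewrite nth_signed_word // /letter /= nth_absz.
suff -> : negative_at n (map absz p) h i.+1 = (nth 0%R p i < 0)%R.
  by case: ifP => /= [h1|/negbT h1]; lia.
rewrite /negative_at; case: ifP => vi; last first.
  by rewrite (snake_sign_pattern sn lti) /= ?negbK ?vi.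
have t_perm : perm_eq (map absz p) (iota 1 n) by case/andP: sp.
have ne := rvalley_has_peak (uniq_perm_word t_perm) (size_perm_word t_perm) vi.
have [_ pj _] := proj1 (assoc_peakP n _ i.+1 _) (conj ne erefl).
by rewrite ne hats // snake_hats_rvalley.
Qed.

Definition period n (f : nat -> nat) x := (find (fun j => iter j.+1 f x == x) (iota 0 n)).+1.
Definition cycle_of n f x := traject f x (period n f x).
Definition is_cycle_max n f k := all (fun x => x <= k) (cycle_of n f k).
Definition foata_of n f :=
  flatten [seq cycle_of n f k | k <- iota 1 n & is_cycle_max n f k].

Lemma foata_of_tau s p : foata s p = foata_of (size s) (tau s p).
Proof. by []. Qed.

Section Cycles.
Variables (n : nat) (f finv : nat -> nat).
Hypotheses (f_range : forall x, 1 <= x <= n -> 1 <= f x <= n)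
           (fK : forall x, 1 <= x <= n -> finv (f x) = x).

Lemma iter_range j x : 1 <= x <= n -> 1 <= iter j f x <= n.
Proof. by move=> hx; elim: j => //= j IH; apply: f_range. Qed.

Lemma iter_subn_fixed a b x : 1 <= x <= n -> a <= b ->
  iter a f x = iter b f x -> iter (b - a) f x = x.
Proof.
move=> hx; elim: a b => [|a IH] b ab; first by rewrite subn0.
case: b ab => [//|b] /= ab E; rewrite subSS; apply: IH => //.
by rewrite -(fK (iter_range a hx)) E fK // iter_range.
Qed.

Lemma has_period x : 1 <= x <= n -> has (fun j => iter j.+1 f x == x) (iota 0 n).
Proof.
move=> hx; have : ~~ uniq (traject f x n.+1).
  apply/negP => U; have sub : {subset traject f x n.+1 <= iota 1 n}.
    by move=> y /trajectP[i _ ->]; rewrite mem_iota add1n ltnS iter_range.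
  by have := uniq_leq_size U sub; rewrite size_traject size_iota ltnn.
rewrite looping_uniq negbK => /trajectP[i lin E].
apply/hasP; exists (n - i).-1; first by rewrite mem_iota; lia.
rewrite prednK; last lia.
by apply/eqP; apply: (iter_subn_fixed hx (ltnW lin)); rewrite E.
Qed.

Lemma periodP x : 1 <= x <= n ->
  [/\ 0 < period n f x <= n, iter (period n f x) f x = x
    & forall r, 0 < r < period n f x -> iter r f x != x].
Proof.
move=> hx; have hp := has_period hx; have := hp; rewrite has_find size_iota => lt.
split; rewrite /period //.
- by apply/eqP; have := nth_find 0 hp; rewrite nth_iota.
- case=> [//|r] /andP[_ lr].
  have rn : r < n by lia.
  by have := before_find 0 lr; rewrite nth_iota // => ->.
Qed.

Lemma uniq_cycle_of x : 1 <= x <= n -> uniq (cycle_of n f x).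
Proof.
move=> hx; have [/andP[p0 _] _ minp] := periodP hx.
rewrite /cycle_of -(prednK p0) looping_uniq; apply/negP => /trajectP[i lti E].
have := minp ((period n f x).-1 - i); rewrite iter_subn_fixed //; last lia.
by rewrite eqxx => /(_ (ltac:(lia))).
Qed.

Lemma iter_mul_period c x : 1 <= x <= n -> iter (c * period n f x) f x = x.
Proof.
move=> hx; have [_ px _] := periodP hx.
by elim: c => [|c IH]; [rewrite mul0n | rewrite mulSn iterD IH px].
Qed.

Lemma mem_cycle_ofP (x y : nat) : 1 <= x <= n ->
  reflect (exists r, y = iter r f x) (y \in cycle_of n f x).
Proof.
move=> hx; have [/andP[p0 _] px _] := periodP hx; apply: (iffP trajectP).
  by case=> i _ ->; exists i.
case=> r ->; exists (r %% period n f x); first by rewrite ltn_pmod.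
by rewrite {1}(divn_eq r (period n f x)) addnC iterD iter_mul_period.
Qed.

Lemma cycle_of_range (x y : nat) : 1 <= x <= n -> y \in cycle_of n f x -> 1 <= y <= n.
Proof. by move=> hx /(mem_cycle_ofP _ hx)[r ->]; apply: iter_range. Qed.

Lemma cycle_of_self (x : nat) : 1 <= x <= n -> x \in cycle_of n f x.
Proof. by move=> hx; apply/(mem_cycle_ofP _ hx); exists 0. Qed.

Lemma cycle_of_sym (x y : nat) : 1 <= x <= n -> y \in cycle_of n f x -> x \in cycle_of n f y.
Proof.
move=> hx hy; have hy' := cycle_of_range hx hy.
case/(mem_cycle_ofP _ hx): hy => a E; apply/(mem_cycle_ofP _ hy').
have [/andP[p0 _] _ _] := periodP hx.
exists (a * period n f x - a); rewrite E -iterD subnK ?iter_mul_period //.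
by rewrite leq_pmulr.
Qed.

Lemma cycle_of_trans (x y z : nat) : 1 <= x <= n ->
  y \in cycle_of n f x -> z \in cycle_of n f y -> z \in cycle_of n f x.
Proof.
move=> hx hy hz; have hy' := cycle_of_range hx hy.
case/(mem_cycle_ofP _ hx): hy => a Ea; case/(mem_cycle_ofP _ hy'): hz => b Eb.
by apply/(mem_cycle_ofP _ hx); exists (b + a); rewrite iterD -Ea.
Qed.

End Cycles.

Lemma bigmax_seq_mem (s : seq nat) : s != [::] -> \max_(x <- s) x \in s.
Proof.
elim: s => [//|y s IH] _; rewrite big_cons inE.
case: (leqP y (\max_(x <- s) x)) => h; last by rewrite eqxx.
case: s IH h => [|z s] IH h; first by move: h; rewrite big_nil leqn0 => /eqP ->.
by rewrite IH ?orbT.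
Qed.

Definition pmax (t : seq nat) i := \max_(x <- take i t) x.

(* Inverting Foata's map: within a cycle each letter is followed by its image,
   and a cycle ends (mapping its last letter back to the current maximum) exactly
   before the next left-to-right maximum of the word. *)
Definition foata_rule (f : nat -> nat) (t : seq nat) i : Prop :=
  f (letter t i) = if (i < size t) && (letter t i.+1 < pmax t i) then letter t i.+1
                   else pmax t i.
Definition is_foata_word f t : Prop := forall i, 1 <= i <= size t -> foata_rule f t i.

Section FoataCat.
Variables (f : nat -> nat) (t : seq nat) (h o : nat).
Hypotheses (t_foata : is_foata_word f t) (t_lt : all (fun x => x < h) t)
  (o_gt0 : 0 < o) (h_period : iter o f h = h)
  (h_min : forall r, 0 < r < o -> iter r f h != h)
  (h_max : all (fun x => x <= h) (traject f h o)).

Let b := traject f h o.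

Lemma nth_traject_cycle r : r < o -> nth 0 b r = iter r f h.
Proof. by move=> lr; rewrite (set_nth_default h) ?size_traject // nth_traject. Qed.

Lemma is_foata_word_cat_left i : 1 <= i <= size t -> foata_rule f (t ++ b) i.
Proof.
rewrite /foata_rule => hi.
have -> : letter (t ++ b) i = letter t i by rewrite /letter nth_cat ifT //; lia.
have -> : pmax (t ++ b) i = pmax t i.
  rewrite /pmax take_cat; case: ltnP => // ti.
  have -> : i = size t by lia.
  by rewrite subnn take0 cats0 take_size.
rewrite t_foata // size_cat size_traject.
have [lt|ei] : i < size t \/ i = size t by lia.
  by rewrite (ltn_addr _ lt) lt /letter /= nth_cat lt.
have -> : letter (t ++ b) i.+1 = h.
  by rewrite /letter ei /= nth_cat ltnn subnn nth_traject_cycle.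
have t0 : t != [::] by case: (t) ei hi => //= ->.
have : pmax t i < h by rewrite /pmax ei take_size; apply: (allP t_lt); apply: bigmax_seq_mem.
by move=> lt; rewrite [h < _]ltnNge (ltnW lt) andbF ei ltnn.
Qed.

Lemma is_foata_word_cat_right i : size t < i <= size t + o -> foata_rule f (t ++ b) i.
Proof.
rewrite /foata_rule => hi; have -> : i = size t + (i - size t).-1.+1 by lia.
have ro : (i - size t).-1 < o by lia.
move: ((i - size t).-1) ro => r ro.
have letterE m : m < o -> letter (t ++ b) (size t + m.+1) = iter m f h.
  by move=> mo; rewrite /letter addnS /= nth_cat ltnNge leq_addr /= addKn nth_traject_cycle.
have -> : pmax (t ++ b) (size t + r.+1) = h.
  rewrite /pmax take_cat ltnNge leq_addr /= addKn big_cat /=.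
  have -> : \max_(x <- take r.+1 b) x = h.
    apply/eqP; rewrite eqn_leq; apply/andP; split.
      by apply/bigmax_leqP_seq => x /mem_take hx _; apply: (allP h_max).
    by apply: (leq_bigmax_seq h) => //; rewrite /b -(prednK o_gt0) /= inE eqxx.
  by apply/maxn_idPr/bigmax_leqP_seq => x xt _; apply/ltnW/(allP t_lt).
rewrite letterE // -iterS size_cat size_traject ltn_add2l.
case: (ltnP r.+1 o) => ro1; last by rewrite (_ : r.+1 = o) //; lia.
rewrite -addnS letterE //.
have : iter r.+1 f h <= h by apply: (allP h_max); rewrite -nth_traject_cycle // mem_nth // size_traject.
by rewrite leq_eqVlt (negbTE (h_min _)) /= => [-> | ]; lia.
Qed.

Lemma is_foata_word_cat : is_foata_word f (t ++ b).
Proof.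
move=> i hi; have sz : size (t ++ b) = size t + o by rewrite size_cat size_traject.
by case: (leqP i (size t)) => ti;
  [apply: is_foata_word_cat_left | apply: is_foata_word_cat_right]; lia.
Qed.

End FoataCat.

Section FoataOf.
Variables (n : nat) (f finv : nat -> nat).
Hypotheses (f_range : forall x, 1 <= x <= n -> 1 <= f x <= n)
           (fK : forall x, 1 <= x <= n -> finv (f x) = x).

Definition foata_prefix m :=
  flatten [seq cycle_of n f k | k <- iota 1 m & is_cycle_max n f k].

Lemma foata_prefixS m : foata_prefix m.+1 =
  foata_prefix m ++ (if is_cycle_max n f m.+1 then cycle_of n f m.+1 else [::]).
Proof.
rewrite /foata_prefix iota1S filter_rcons.
by case: is_cycle_max; rewrite ?map_rcons ?flatten_rcons ?cats0.
Qed.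

Lemma mem_foata_prefixP m x :
  reflect (exists k, [/\ 1 <= k <= m, is_cycle_max n f k & x \in cycle_of n f k])
          (x \in foata_prefix m).
Proof.
apply: (iffP flatten_mapP) => [[k]|[k [hk mk hx]]].
  by rewrite mem_filter mem_iota => /andP[mk hk] hx; exists k; split=> //; lia.
by exists k => //; rewrite mem_filter mem_iota mk; lia.
Qed.

Lemma foata_prefix_le m : all (fun x => x <= m) (foata_prefix m).
Proof.
apply/allP=> x /mem_foata_prefixP[k [hk mk hx]].
by have := allP mk x hx; lia.
Qed.

Lemma foata_prefix_word m : m <= n -> is_foata_word f (foata_prefix m).
Proof.
elim: m => [|m IH] mn; first by move=> i /=; lia.
rewrite foata_prefixS; case mk: (is_cycle_max n f m.+1); last first.
  by rewrite cats0; apply: IH; lia.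
have hm : 1 <= m.+1 <= n by lia.
have [/andP[p0 _] pm minp] := periodP f_range fK hm.
apply: is_foata_word_cat => //; first exact: IH (ltnW mn).
by apply/allP=> x hx; have := allP (foata_prefix_le m) x hx; lia.
Qed.

Lemma foata_prefix_uniq m : m <= n -> uniq (foata_prefix m).
Proof.
elim: m => [|m IH] mn //.
rewrite foata_prefixS; case mk: (is_cycle_max n f m.+1); last first.
  by rewrite cats0; apply: IH; lia.
have hm : 1 <= m.+1 <= n by lia.
rewrite cat_uniq (uniq_cycle_of f_range fK hm) andbT IH; last lia.
apply/hasPn=> x hx; apply/negP => /mem_foata_prefixP[k [hk mk' hxk]].
have hk' : 1 <= k <= n by lia.
have mk_in : m.+1 \in cycle_of n f k.
  by apply: (cycle_of_trans f_range fK hk' hxk); apply: (cycle_of_sym f_range fK hm).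
by have := allP mk' _ mk_in; lia.
Qed.

Lemma perm_foata_of : perm_eq (foata_of n f) (iota 1 n).
Proof.
apply: uniq_perm; [exact: foata_prefix_uniq | exact: iota_uniq | move=> x].
apply/idP/idP => [/mem_foata_prefixP[k [hk _ hx]] | ].
  by have := cycle_of_range f_range fK (_ : 1 <= k <= n) hx; rewrite mem_iota; lia.
rewrite mem_iota => hx; have {}hx : 1 <= x <= n by lia.
have [k kx kmax] : exists2 k, k \in cycle_of n f x & forall y, y \in cycle_of n f x -> y <= k.
  exists (\max_(y <- cycle_of n f x) y); last by move=> y hy; apply: leq_bigmax_seq.
  by apply: bigmax_seq_mem; apply/eqP => E; have := cycle_of_self f_range fK hx; rewrite E.
apply/mem_foata_prefixP; exists k; split.
- exact: (cycle_of_range f_range fK hx kx).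
- by apply/allP=> y hy; apply/kmax/(cycle_of_trans f_range fK hx kx hy).
- exact: (cycle_of_sym f_range fK hx kx).
Qed.

Lemma foata_of_word : is_foata_word f (foata_of n f).
Proof. exact: foata_prefix_word. Qed.

End FoataOf.

Section FoataWord.
Variables (n : nat) (t : seq nat).
Hypothesis t_perm : perm_eq t (iota 1 n).

Lemma letter_le_pmax i : 1 <= i <= n -> letter t i <= pmax t i.
Proof.
move=> hi; apply: (leq_bigmax_seq (letter t i)) => //.
have -> : take i t = take i.-1.+1 t by rewrite prednK //; lia.
rewrite (take_nth 0); first by rewrite mem_rcons mem_head.
by rewrite (size_perm_word t_perm); lia.
Qed.

Variables (f finv : nat -> nat).
Hypotheses (t_foata : is_foata_word f t)
  (finv_range : forall x, 1 <= x <= n -> 1 <= finv x <= n)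
  (fK : forall x, 1 <= x <= n -> finv (f x) = x)
  (finvK : forall x, 1 <= x <= n -> f (finv x) = x).

Lemma foata_word_succ i : 1 <= i <= n ->
  f (letter t i) = if (i < n) && (letter t i.+1 < pmax t i) then letter t i.+1 else pmax t i.
Proof. by move=> hi; rewrite t_foata (size_perm_word t_perm). Qed.

Lemma right_descent_foata_word i : 1 <= i <= n ->
  (i < n) && (letter t i.+1 < letter t i) = (f (letter t i) < letter t i).
Proof.
move=> hi; have M := letter_le_pmax hi; rewrite foata_word_succ //.
case: (i < n) => /=; last by rewrite ltnNge M.
case: ifP => // /negbT; rewrite -leqNgt => h.
by rewrite ltnNge (leq_trans M h) ltnNge M.
Qed.

Lemma left_ascent_foata_word i : 1 <= i <= n -> f (letter t i) < letter t i ->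
  (i == 1) || (letter t i.-1 < letter t i) = (finv (letter t i) < letter t i).
Proof.
move=> hi fx; set x := letter t i.
have xI : 1 <= x <= n by apply: letter_range.
have [/andP[i1 xm]|C] := boolP ((1 < i) && (x < pmax t i.-1)).
  have E : f (letter t i.-1) = x.
    rewrite foata_word_succ; last lia; rewrite prednK; last lia.
    by rewrite ifT //; apply/andP; split; [lia | exact xm].
  have -> : finv x = letter t i.-1 by rewrite -E fK // letter_range; lia.
  by have -> : (i == 1) = false by lia.
have -> : (i == 1) || (letter t i.-1 < x).
  case: (eqVneq i 1) => //= i1.
  have hm : pmax t i.-1 <= x by move: C; rewrite negb_and; case/orP; lia.
  have hT := @letter_le_pmax i.-1 (ltac:(lia)).
  have := @letter_inj _ _ t_perm i.-1 i (ltac:(lia)) hi; rewrite /x; lia.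
have [i' hi' Ei'] := letter_onto t_perm (finv_range xI).
have := foata_word_succ hi'; rewrite Ei' finvK //; case: ifP => [/andP[lt' c']|_] e.
  have ei : i'.+1 = i by apply: (letter_inj t_perm); [lia | exact hi | exact (esym e)].
  by move: C; rewrite -ei /= e c' andbT ltnS; have -> : 0 < i' by lia.
have := letter_le_pmax hi'; rewrite Ei' -e leq_eqVlt => /orP[/eqP fE|//].
by move: fx; rewrite -/x -{2}(finvK xI) fE ltnn.
Qed.

Lemma lpeak_foata_word i : lpeak n t i =
  [&& 1 <= i <= n, finv (letter t i) < letter t i & f (letter t i) < letter t i].
Proof.
rewrite /lpeak; case: (boolP (1 <= i <= n)) => //= hi.
rewrite right_descent_foata_word //; case: (boolP (f (letter t i) < letter t i)) => fx.
  by rewrite !andbT left_ascent_foata_word.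
by rewrite !andbF.
Qed.

End FoataWord.

Lemma foata_of_inj n f g finv ginv :
  (forall x, 1 <= x <= n -> 1 <= f x <= n) -> (forall x, 1 <= x <= n -> finv (f x) = x) ->
  (forall x, 1 <= x <= n -> 1 <= g x <= n) -> (forall x, 1 <= x <= n -> ginv (g x) = x) ->
  foata_of n f = foata_of n g -> forall x, 1 <= x <= n -> f x = g x.
Proof.
move=> f_range fK g_range gK E x hx.
have [i hi <-] := letter_onto (perm_foata_of f_range fK) hx.
rewrite (foata_word_succ (perm_foata_of f_range fK) (foata_of_word f_range fK) hi) E.
by rewrite -(foata_word_succ (perm_foata_of g_range gK) (foata_of_word g_range gK) hi).
Qed.

Section EqFoataOf.
Variables (n : nat) (f g : nat -> nat).
Hypotheses (f_range : forall x, 1 <= x <= n -> 1 <= f x <= n)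
           (eq_fg : forall x, 1 <= x <= n -> f x = g x).

Lemma eq_iter j x : 1 <= x <= n -> iter j f x = iter j g x.
Proof.
move=> hx; elim: j => //= j IH; rewrite -IH eq_fg //.
by elim: j {IH} => //= j IH; apply: f_range.
Qed.

Lemma eq_traject m x : 1 <= x <= n -> traject f x m = traject g x m.
Proof. by elim: m x => //= m IH x hx; rewrite -eq_fg // IH // f_range. Qed.

Lemma eq_cycle_of k : 1 <= k <= n -> cycle_of n f k = cycle_of n g k.
Proof.
move=> hk; rewrite /cycle_of eq_traject // /period; congr (traject _ _ _.+1).
by apply: eq_find => j; rewrite eq_iter.
Qed.

Lemma eq_foata_of : foata_of n f = foata_of n g.
Proof.
have E : {in iota 1 n, cycle_of n f =1 cycle_of n g}.
  by move=> k; rewrite mem_iota => hk; apply: eq_cycle_of; lia.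
rewrite /foata_of (@eq_in_filter _ _ (is_cycle_max n g)); last first.
  by move=> k hk; rewrite /is_cycle_max E.
by congr flatten; apply/eq_in_map => k; rewrite mem_filter => /andP[_ /E].
Qed.

End EqFoataOf.

Lemma foata_of_onto n t : perm_eq t (iota 1 n) ->
  exists2 s : seq nat, perm_eq s (iota 1 n) & foata_of n (letter s) = t.
Proof.
move=> t_perm; set L := permutations (iota 1 n).
have inj : {in L &, injective (fun s => foata_of n (letter s))}.
  move=> s1 s2; rewrite !mem_permutations => p1 p2 E.
  have E' := foata_of_inj (letter_range p1) (letterK p1) (letter_range p2) (letterK p2) E.
  apply: (@eq_from_nth _ 0); first by rewrite (size_perm_word p1) (size_perm_word p2).
  by move=> i; rewrite (size_perm_word p1) => lt; apply: (E' i.+1); lia.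
have U : uniq (map (fun s => foata_of n (letter s)) L).
  by rewrite map_inj_in_uniq // permutations_uniq.
have S : {subset map (fun s => foata_of n (letter s)) L <= L}.
  move=> u /mapP[s]; rewrite !mem_permutations => ps ->.
  exact: (perm_foata_of (letter_range ps) (letterK ps)).
have [_ M] := uniq_min_size U S (ltac:(by rewrite size_map)).
have : t \in map (fun s => foata_of n (letter s)) L by rewrite M mem_permutations.
by case/mapP=> s; rewrite mem_permutations => ps ->; exists s.
Qed.

Definition pair_max (f : nat -> nat) x := maxn x (f x).

(* In a 3-WIP the letters sigma_i are sorted by max(sigma_i, tau sigma_i); the
   only possible tie is between a cycle peak k and tau^-1(k), and k comes first
   exactly when it is hatted.  [wip_key] linearizes this order; its last
   summand only makes it injective. *)
Definition tie (f : nat -> nat) (H : pred nat) x : nat :=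
  if x == pair_max f x then ~~ H x else H (pair_max f x).
Definition wip_key n f H x := ((pair_max f x).*2 + tie f H x) * n.+1 + minn x n.

Section WipKey.
Variables (n : nat) (f : nat -> nat) (H : pred nat).

Lemma tie_le1 x : tie f H x <= 1.
Proof. by rewrite /tie; case: ifP => _; [case: (H x) | case: (H _)]. Qed.

Lemma wip_key_lt_max x y : pair_max f x < pair_max f y -> wip_key n f H x < wip_key n f H y.
Proof.
rewrite /wip_key => lt; have := tie_le1 x; have : minn x n < n.+1 by lia.
move: (tie f H x) (tie f H y) (minn x n) (minn y n) (pair_max f x) (pair_max f y) lt.
by move=> *; nia.
Qed.

Lemma wip_key_max_le x y : wip_key n f H x < wip_key n f H y -> pair_max f x <= pair_max f y.
Proof. by move=> h; rewrite leqNgt; apply/negP => /wip_key_lt_max; lia. Qed.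

Lemma wip_key_lt_tie x y : pair_max f x = pair_max f y -> tie f H x < tie f H y ->
  wip_key n f H x < wip_key n f H y.
Proof.
rewrite /wip_key => e lt; rewrite e; have : minn x n < n.+1 by lia.
by move: (tie f H x) (tie f H y) (minn x n) (minn y n) (pair_max f y) lt => *; nia.
Qed.

Lemma wip_key_inj x y : 1 <= x <= n -> 1 <= y <= n ->
  wip_key n f H x = wip_key n f H y -> x = y.
Proof.
move=> hx hy /(congr1 (modn^~ n.+1)).
by rewrite /wip_key !modnMDl !modn_small; lia.
Qed.

End WipKey.

Section Wip.
Variables (n : nat) (s p : seq nat).
Hypothesis s_p_wip : is_WIP n (s, p).

Lemma wip_perm1 : perm_eq s (iota 1 n). Proof. by case/and3P: s_p_wip. Qed.
Lemma wip_perm2 : perm_eq p (iota 1 n). Proof. by case/and3P: s_p_wip. Qed.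

Lemma wip_size1 : size s = n. Proof. exact: size_perm_word wip_perm1. Qed.
Lemma wip_size2 : size p = n. Proof. exact: size_perm_word wip_perm2. Qed.
Lemma wip_uniq1 : uniq s. Proof. exact: uniq_perm_word wip_perm1. Qed.
Lemma wip_uniq2 : uniq p. Proof. exact: uniq_perm_word wip_perm2. Qed.

Lemma wip_mem1 x : 1 <= x <= n -> x \in s.
Proof. by rewrite (perm_mem wip_perm1) mem_iota; lia. Qed.
Lemma wip_mem2 x : 1 <= x <= n -> x \in p.
Proof. by rewrite (perm_mem wip_perm2) mem_iota; lia. Qed.

Lemma wip_nth1 i : i < n -> 1 <= nth 0 s i <= n.
Proof. by move=> lt; have := @letter_range _ _ wip_perm1 i.+1; apply; lia. Qed.
Lemma wip_nth2 i : i < n -> 1 <= nth 0 p i <= n.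
Proof. by move=> lt; have := @letter_range _ _ wip_perm2 i.+1; apply; lia. Qed.

Lemma tau_nth i : i < n -> tau s p (nth 0 s i) = nth 0 p i.
Proof. by move=> lt; rewrite /tau index_uniq ?wip_size1 ?wip_uniq1. Qed.
Lemma tau_inv_nth i : i < n -> tau_inv s p (nth 0 p i) = nth 0 s i.
Proof. by move=> lt; rewrite /tau_inv index_uniq ?wip_size2 ?wip_uniq2. Qed.

Lemma tau_range x : 1 <= x <= n -> 1 <= tau s p x <= n.
Proof. by move=> hx; apply/wip_nth2; rewrite -wip_size1 index_mem wip_mem1. Qed.
Lemma tau_inv_range x : 1 <= x <= n -> 1 <= tau_inv s p x <= n.
Proof. by move=> hx; apply/wip_nth1; rewrite -wip_size2 index_mem wip_mem2. Qed.

Lemma tauK x : 1 <= x <= n -> tau_inv s p (tau s p x) = x.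
Proof.
move=> hx; have xs := wip_mem1 hx; have ix : index x s < n by rewrite -wip_size1 index_mem.
by rewrite -{1}(nth_index 0 xs) tau_nth // tau_inv_nth // nth_index.
Qed.
Lemma tau_invK x : 1 <= x <= n -> tau s p (tau_inv s p x) = x.
Proof.
move=> hx; have xp := wip_mem2 hx; have ix : index x p < n by rewrite -wip_size2 index_mem.
by rewrite -{1}(nth_index 0 xp) tau_inv_nth // tau_nth // nth_index.
Qed.

Lemma wip_map_tau : p = map (tau s p) s.
Proof.
apply: (@eq_from_nth _ 0); first by rewrite size_map wip_size1 wip_size2.
by move=> i; rewrite wip_size2 => lt; rewrite (nth_map 0) ?wip_size1 // tau_nth.
Qed.

Lemma wip_pair_max_le i : i.+1 < n ->
  pair_max (tau s p) (nth 0 s i) <= pair_max (tau s p) (nth 0 s i.+1).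
Proof.
move=> lt; have /and3P[_ _ /(sortedP 0) /(_ i)] := s_p_wip.
rewrite size_map size_zip wip_size1 wip_size2 minnn => /(_ lt).
rewrite !(nth_map (0, 0)) ?size_zip ?wip_size1 ?wip_size2 ?minnn; try lia.
by rewrite !nth_zip ?wip_size1 ?wip_size2 //= /pair_max !tau_nth //; lia.
Qed.

Lemma wip_hatted_adj i : i.+1 < n -> nth 0 s i = tau s p (nth 0 s i.+1) ->
  nth 0 s i.+1 < nth 0 s i -> hatted s p (nth 0 s i).
Proof.
move=> lt E yx.
have hx : 1 <= nth 0 s i <= n by apply: wip_nth1; lia.
have px : tau s p (nth 0 s i) <= nth 0 s i.
  by have := wip_pair_max_le lt; rewrite /pair_max -E; lia.
have tx : tau s p (nth 0 s i) != nth 0 s i.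
  by rewrite [X in _ != X]E !tau_nth ?nth_uniq ?wip_size2 ?wip_uniq2 //; lia.
apply/andP; split.
  rewrite /cycle_peak wip_size1 [X in tau_inv _ _ X]E tauK ?wip_nth1 //.
  by have := wip_nth1 lt; lia.
apply/hasP; exists i.+1; first by rewrite mem_iota wip_size1; lia.
by rewrite /= eqxx -tau_nth // -E eqxx.
Qed.

Lemma wip_not_hatted_adj i : i.+1 < n -> tau s p (nth 0 s i) = nth 0 s i.+1 ->
  ~~ hatted s p (nth 0 s i.+1).
Proof.
move=> lt E; rewrite negb_and; apply/orP; right.
apply/hasPn => l; rewrite mem_iota wip_size1 => hl; apply/negP => /andP[/eqP a /eqP b].
have l1 : l.-1 = i.+1 by apply/eqP; rewrite -(nth_uniq 0 _ _ wip_uniq1) ?wip_size1 ?a //; lia.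
have : nth 0 p l = nth 0 p i by rewrite b -E tau_nth //; lia.
by move/eqP; rewrite nth_uniq ?wip_size2 ?wip_uniq2 //; lia.
Qed.

Lemma wip_key_sorted :
  sorted (fun x y => wip_key n (tau s p) (hatted s p) x < wip_key n (tau s p) (hatted s p) y) s.
Proof.
apply/(sortedP 0) => i; rewrite wip_size1 => lt.
have := wip_pair_max_le lt; rewrite leq_eqVlt => /orP[/eqP e|]; last exact: wip_key_lt_max.
apply: wip_key_lt_tie => //; rewrite /tie -e.
set x := nth 0 s i in e *; set y := nth 0 s i.+1 in e *; set k := pair_max _ x in e *.
have xy : x != y by rewrite nth_uniq ?wip_size1 ?wip_uniq1 //; lia.
have txy : tau s p x != tau s p y by rewrite !tau_nth ?nth_uniq ?wip_size2 ?wip_uniq2 //; lia.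
have [xk|txk] : x = k \/ tau s p x = k by rewrite /k /pair_max; lia.
  have yk : y != k by rewrite -xk eq_sym.
  have tyk : x = tau s p y by move: e yk; rewrite xk /pair_max; lia.
  rewrite xk eqxx (negbTE yk) -xk (wip_hatted_adj lt tyk) //.
  by move: e yk; rewrite /pair_max -xk; lia.
have yk : y = k by move: e txy; rewrite /pair_max -txk; lia.
have xk : x != k by rewrite yk in xy.
have nh := wip_not_hatted_adj lt (etrans txk (esym yk)).
by rewrite (negbTE xk) yk eqxx -yk (negbTE nh).
Qed.

End Wip.

Lemma wip_inj n s p s' p' : is_WIP n (s, p) -> is_WIP n (s', p') ->
  (forall x, 1 <= x <= n -> tau s p x = tau s' p' x) ->
  (forall k, 1 <= k <= n -> hatted s p k = hatted s' p' k) -> (s, p) = (s', p').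
Proof.
move=> W W' Etau Ehat.
set key := wip_key n (tau s p) (hatted s p).
have Ekey x : 1 <= x <= n -> key x = wip_key n (tau s' p') (hatted s' p') x.
  move=> hx; have hm : 1 <= pair_max (tau s p) x <= n.
    by have := tau_range W hx; rewrite /pair_max; lia.
  by rewrite /key /wip_key /tie /pair_max -Etau // Ehat // -/(pair_max _ x) Ehat.
have s'_range : all [pred x | 1 <= x <= n] s'.
  by apply/allP => x; rewrite (perm_mem (wip_perm1 W')) mem_iota /=; lia.
have sorted' : sorted (fun x y => key x < key y) s'.
  have Ekey2 : {in [pred x | 1 <= x <= n] &, (fun x y => key x < key y) =2
      (fun x y => wip_key n (tau s' p') (hatted s' p') x <
                  wip_key n (tau s' p') (hatted s' p') y)}.
    by move=> x y hx hy /=; rewrite !Ekey.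
  by rewrite (eq_in_sorted Ekey2 s'_range); apply: wip_key_sorted W'.
have es : s = s'.
  apply: (irr_sorted_eq (leT := fun x y => key x < key y)) (wip_key_sorted W) sorted' _.
  - by move=> x y z /= h1 h2; apply: ltn_trans h1 h2.
  - by move=> x /=; rewrite ltnn.
  - by move=> x; rewrite (perm_mem (wip_perm1 W)) (perm_mem (wip_perm1 W')).
subst s'; rewrite (wip_map_tau W) (wip_map_tau W'); congr (_, _); apply/eq_in_map => x.
by rewrite (perm_mem (wip_perm1 W)) mem_iota => hx; rewrite Etau //; lia.
Qed.

Lemma zip_map_pair_max (g : nat -> nat) s :
  [seq maxn x.1 x.2 | x <- zip s (map g s)] = map (pair_max g) s.
Proof. by elim: s => //= x s ->. Qed.

Section WipOf.
Variables (n : nat) (w : seq nat) (H : pred nat).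
Hypothesis w_perm : perm_eq w (iota 1 n).

Notation key := (wip_key n (letter w) H).

Definition wip_sigma := sort (fun x y => key x <= key y) (iota 1 n).
Definition wip_pi := map (letter w) wip_sigma.

Lemma perm_wip_sigma : perm_eq wip_sigma (iota 1 n).
Proof. by rewrite perm_sort. Qed.

Lemma wip_sigma_range x : x \in wip_sigma -> 1 <= x <= n.
Proof. by rewrite (perm_mem perm_wip_sigma) mem_iota; lia. Qed.

Let sigma_size := size_perm_word perm_wip_sigma.
Let sigma_uniq := uniq_perm_word perm_wip_sigma.

Lemma wip_sigma_sorted : sorted (fun x y => key x < key y) wip_sigma.
Proof.
have S : sorted (fun x y => key x <= key y) wip_sigma.
  by apply: sort_sorted => x y; apply: leq_total.
have U : uniq (map key wip_sigma).
  rewrite map_inj_in_uniq // => x y hx hy.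
  by apply: wip_key_inj; apply: wip_sigma_range.
have : sorted ltn (map key wip_sigma) by rewrite ltn_sorted_uniq_leq U sorted_map.
by rewrite sorted_map.
Qed.

Lemma perm_wip_pi : perm_eq wip_pi (iota 1 n).
Proof.
apply: uniq_perm; [| exact: iota_uniq |].
  rewrite map_inj_in_uniq // => x y /wip_sigma_range hx /wip_sigma_range hy e.
  by rewrite -(letterK w_perm hx) e (letterK w_perm hy).
move=> x; apply/mapP/idP => [[y /wip_sigma_range hy ->] | ].
  by rewrite mem_iota; have := letter_range w_perm hy; lia.
rewrite mem_iota => hx; have {}hx : 1 <= x <= n by lia.
exists (index_of w x); last by rewrite (index_ofK w_perm hx).
by rewrite (perm_mem perm_wip_sigma) mem_iota; have := index_of_range w_perm hx; lia.
Qed.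

Lemma wip_of_is_WIP : is_WIP n (wip_sigma, wip_pi).
Proof.
apply/and3P; split; [exact: perm_wip_sigma | exact: perm_wip_pi |].
rewrite /= /wip_pi zip_map_pair_max sorted_map.
by apply: sub_sorted wip_sigma_sorted => x y /=; apply: wip_key_max_le.
Qed.

Lemma tau_wip_of x : 1 <= x <= n -> tau wip_sigma wip_pi x = letter w x.
Proof.
move=> hx; have xs : x \in wip_sigma by rewrite (perm_mem perm_wip_sigma) mem_iota; lia.
by rewrite /tau /wip_pi (nth_map 0) ?index_mem // nth_index.
Qed.

Lemma nth_wip_sigma_inj a b : a < n -> b < n ->
  nth 0 wip_sigma a = nth 0 wip_sigma b -> a = b.
Proof.
by move=> ha hb e; apply/eqP; rewrite -(nth_uniq 0 _ _ sigma_uniq) ?sigma_size ?e.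
Qed.

Lemma wip_sigma_key_lt a b : a < n -> b < n ->
  (key (nth 0 wip_sigma a) < key (nth 0 wip_sigma b)) = (a < b).
Proof.
have lt_nth c d : c < n -> d < n -> c < d -> key (nth 0 wip_sigma c) < key (nth 0 wip_sigma d).
  move=> hc hd cd; apply: (sorted_ltn_nth (leT := fun x y => key x < key y)) => //.
  - by move=> u v z; apply: ltn_trans.
  - exact: wip_sigma_sorted.
  - by rewrite inE sigma_size.
  - by rewrite inE sigma_size.
move=> ha hb; case: (ltngtP a b) => [|ba|->]; [exact: lt_nth | | by rewrite ltnn].
by apply/negbTE; rewrite -leqNgt ltnW // lt_nth.
Qed.

Lemma has_wip_of_adj k : 1 <= k <= n ->
  has (fun l => (nth 0 wip_sigma l.-1 == k) && (nth 0 wip_pi l == k))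
      (iota 1 (size wip_sigma).-1) =
  (index (index_of w k) wip_sigma == (index k wip_sigma).+1).
Proof.
move=> hk; set y := index_of w k; have hy := index_of_range w_perm hk.
have mem x : 1 <= x <= n -> x \in wip_sigma by rewrite (perm_mem perm_wip_sigma) mem_iota; lia.
have jn : index k wip_sigma < n by rewrite -sigma_size index_mem mem.
rewrite sigma_size; apply/hasP/eqP => [[l] | e].
  rewrite mem_iota => hl /andP[/eqP a /eqP b].
  have l1 : l.-1 = index k wip_sigma.
    by apply: nth_wip_sigma_inj; [lia | done | rewrite a nth_index ?mem].
  have hlI : 1 <= nth 0 wip_sigma l <= n by apply: wip_sigma_range; rewrite mem_nth ?sigma_size //; lia.
  have : nth 0 wip_sigma l = y.
    by rewrite /y -b /wip_pi (nth_map 0) ?sigma_size ?(letterK w_perm hlI) //; lia.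
  by move/(congr1 (index^~ wip_sigma)); rewrite index_uniq ?sigma_size //; lia.
have jn' : index y wip_sigma < n by rewrite -sigma_size index_mem mem.
exists (index k wip_sigma).+1; first by rewrite mem_iota; lia.
rewrite /= nth_index ?mem // eqxx /wip_pi (nth_map 0) -?e ?nth_index ?mem //.
  by rewrite /y (index_ofK w_perm hk) eqxx.
by rewrite sigma_size.
Qed.

Lemma wip_of_peak_adj k : 1 <= k <= n -> index_of w k < k -> letter w k < k ->
  (index (index_of w k) wip_sigma == (index k wip_sigma).+1) = H k.
Proof.
move=> hk yk fk; have hy := index_of_range w_perm hk.
have fy := index_ofK w_perm hk.
move: (index_of w k) hy yk fy => y hy yk fy.
have mem x : 1 <= x <= n -> x \in wip_sigma by rewrite (perm_mem perm_wip_sigma) mem_iota; lia.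
have nj := nth_index 0 (mem k hk); have nj' := nth_index 0 (mem y hy).
have jn : index k wip_sigma < n by rewrite -sigma_size index_mem mem.
have jn' : index y wip_sigma < n by rewrite -sigma_size index_mem mem.
move: (index k wip_sigma) (index y wip_sigma) nj nj' jn jn' => j j' nj nj' jn jn'.
have mk : pair_max (letter w) k = k by rewrite /pair_max; lia.
have my : pair_max (letter w) y = k by rewrite /pair_max fy; lia.
have tk : tie (letter w) H k = ~~ H k by rewrite /tie mk eqxx.
have ty : tie (letter w) H y = H k by rewrite /tie my ifN //; lia.
case Hk: (H k); last first.
  have : key y < key k by apply: wip_key_lt_tie; [rewrite mk my | rewrite tk ty Hk].
  by rewrite -nj -nj' wip_sigma_key_lt //; lia.
have : key k < key y by apply: wip_key_lt_tie; [rewrite mk my | rewrite tk ty Hk].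
rewrite -nj -nj' wip_sigma_key_lt // => jj'; apply/eqP.
case: (ltngtP j' j.+1) => // e; first lia.
have z1 : j.+1 < n by lia.
have hz : 1 <= nth 0 wip_sigma j.+1 <= n by apply: wip_sigma_range; rewrite mem_nth ?sigma_size.
have m1 : pair_max (letter w) k <= pair_max (letter w) (nth 0 wip_sigma j.+1).
  by apply: (@wip_key_max_le n _ H); rewrite -nj wip_sigma_key_lt.
have m2 : pair_max (letter w) (nth 0 wip_sigma j.+1) <= pair_max (letter w) y.
  by apply: (@wip_key_max_le n _ H); rewrite -nj' wip_sigma_key_lt.
have [zk|tzk] : nth 0 wip_sigma j.+1 = k \/ letter w (nth 0 wip_sigma j.+1) = k.
  by move: m1 m2; rewrite mk my /pair_max; lia.
  by move: zk; rewrite -nj => /nth_wip_sigma_inj; lia.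
have : nth 0 wip_sigma j.+1 = y by rewrite -(letterK w_perm hz) tzk -fy (letterK w_perm hy).
by rewrite -nj' => /nth_wip_sigma_inj; lia.
Qed.

Lemma hatted_wip_of k : hatted wip_sigma wip_pi k =
  [&& 2 <= k <= n, index_of w k < k, letter w k < k & H k].
Proof.
rewrite /hatted /cycle_peak sigma_size.
have [hk2|] //= := boolP (2 <= k <= n); have hk : 1 <= k <= n by lia.
have hy := index_of_range w_perm hk.
have -> : tau_inv wip_sigma wip_pi k = index_of w k.
  by rewrite -{1}(index_ofK w_perm hk) -(tau_wip_of hy) (tauK wip_of_is_WIP).
rewrite tau_wip_of //.
have [yk|] //= := boolP (index_of w k < k); have [fk|] //= := boolP (letter w k < k).
by rewrite -sigma_size has_wip_of_adj // wip_of_peak_adj.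
Qed.

End WipOf.

Lemma lpeak_foata_of n f finv j :
  (forall x, 1 <= x <= n -> 1 <= f x <= n) -> (forall x, 1 <= x <= n -> 1 <= finv x <= n) ->
  (forall x, 1 <= x <= n -> finv (f x) = x) -> (forall x, 1 <= x <= n -> f (finv x) = x) ->
  lpeak n (foata_of n f) j =
  [&& 1 <= j <= n, finv (letter (foata_of n f) j) < letter (foata_of n f) j
    & f (letter (foata_of n f) j) < letter (foata_of n f) j].
Proof.
move=> f_range finv_range fK finvK.
exact: (lpeak_foata_word (perm_foata_of f_range fK) (foata_of_word f_range fK)).
Qed.

Section PhiWip.
Variables (n : nat) (s p : seq nat).
Hypothesis s_p_wip : is_WIP n (s, p).

Lemma Phi_wip : Phi (s, p) = signed_word n (foata_of n (tau s p)) (hatted s p).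
Proof. by rewrite Phi_signed_word foata_of_tau (wip_size1 s_p_wip). Qed.

Lemma perm_foata_wip : perm_eq (foata_of n (tau s p)) (iota 1 n).
Proof. exact: perm_foata_of (tau_range s_p_wip) (tauK s_p_wip). Qed.

Lemma cycle_peak_lpeak k : cycle_peak s p k ->
  exists2 j, lpeak n (foata_of n (tau s p)) j & letter (foata_of n (tau s p)) j = k.
Proof.
rewrite /cycle_peak (wip_size1 s_p_wip) => /and3P[hk tik tk].
have hk1 : 1 <= k <= n by lia.
have [j hj jk] := letter_onto perm_foata_wip hk1.
exists j => //; rewrite (lpeak_foata_of _ (tau_range s_p_wip) (tau_inv_range s_p_wip)).
- by rewrite jk hj tik tk.
- exact: tauK s_p_wip.
- exact: tau_invK s_p_wip.
Qed.

End PhiWip.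

Lemma Phi_snake n w : 1 <= n -> is_WIP n w -> is_snake n (Phi w).
Proof.
move=> n1; case: w => s p W.
by rewrite (Phi_wip W); apply: (signed_word_snake (perm_foata_wip W)).
Qed.

Lemma Phi_inj n : {in [pred w | is_WIP n w] &, injective Phi}.
Proof.
move=> [s p] [s' p']; rewrite !inE => W W'; rewrite (Phi_wip W) (Phi_wip W') => E.
have Et : foata_of n (tau s p) = foata_of n (tau s' p').
  rewrite -(abs_signed_word (hatted s p) (size_perm_word (perm_foata_wip W))) E.
  by rewrite abs_signed_word ?(size_perm_word (perm_foata_wip W')).
have Etau := foata_of_inj (tau_range W) (tauK W) (tau_range W') (tauK W') Et.
have Etau_inv x : 1 <= x <= n -> tau_inv s p x = tau_inv s' p' x.
  move=> hx; have hy := tau_inv_range W hx.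
  by rewrite -{2}(tau_invK W hx) Etau // (tauK W').
apply: (wip_inj W W' Etau) => k hk.
have Ecp : cycle_peak s p k = cycle_peak s' p' k.
  by rewrite /cycle_peak (wip_size1 W) (wip_size1 W') Etau // Etau_inv.
case cp: (cycle_peak s p k); last by rewrite /hatted cp -Ecp cp.
have [j pj <-] := cycle_peak_lpeak W cp.
by apply: (signed_word_hats (perm_foata_wip W) _ pj); rewrite E Et.
Qed.

Lemma Phi_onto n q : is_snake n q -> exists2 w, is_WIP n w & Phi w = q.
Proof.
move=> sn; have t_perm : perm_eq (map absz q) (iota 1 n) by case/and3P: sn => /andP[].
have [w w_perm Ew] := foata_of_onto t_perm.
have W := wip_of_is_WIP (snake_hats n q) w_perm.
exists (wip_sigma n w (snake_hats n q), wip_pi n w (snake_hats n q)) => //.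
rewrite (Phi_wip W) (@eq_foata_of _ _ (letter w) (tau_range W)); last exact: tau_wip_of.
rewrite Ew; apply: signed_word_of_snake => // j.
rewrite -{1 2 3}Ew (lpeak_foata_of _ (letter_range w_perm) (index_of_range w_perm)
  (letterK w_perm) (index_ofK w_perm)) Ew => /and3P[hj yk fk].
rewrite hatted_wip_of; case: snake_hats; rewrite ?andbT ?andbF //.
apply/and3P; split => //; have := index_of_range w_perm (letter_range t_perm hj).
by have := letter_range t_perm hj; lia.
Qed.

Theorem theorem2p1 (n : nat) : 1 <= n ->
  (forall w : seq nat * seq nat, is_WIP n w -> is_snake n (Phi w)) /\
  {in [pred w | is_WIP n w] &, injective Phi} /\
  (forall q : seq int, is_snake n q -> exists2 w, is_WIP n w & Phi w = q).
Proof.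
move=> n1; split; first by move=> w; apply: Phi_snake.
by split; [apply: Phi_inj | apply: Phi_onto].
Qed.
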